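(* The class of coherent spaces is not $\omega$-projective: there is a projective system of coherent topological spaces, indexed by a directed preordered set with a countable cofinal subset, whose projective limit in the category of topological spaces is not coherent.
   Context: A projective system of topological spaces consists of a directed preordered set $(I,\sqsubseteq)$, spaces $X_i$ and continuous maps $p_{ij}\colon X_j\to X_i$ for $i\sqsubseteq j$ with $p_{ii}=\mathrm{id}$ and $p_{ij}\circ p_{jk}=p_{ik}$; its projective limit is its limit in the category of topological spaces. A space is coherent if the intersection of any two compact saturated subsets is compact (saturated = upward closed in the specialization preorder $x\le y$ iff every open neighbourhood of $x$ contains $y$; compactness assumes no separation axiom). *)

From HB Require Import structures.
From mathcomp Require Import all_boot all_order.
From mathcomp Require Import boolp classical_sets functions cardinality topology.
Set Implicit Arguments. Unset Strict Implicit. Unset Printing Implicit Defensive.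
Local Open Scope classical_set_scope.

Definition spec_le {T : topologicalType} (x y : T) : Prop :=
  forall U : set T, open U -> U x -> U y.

Definition saturated {T : topologicalType} (A : set T) : Prop :=
  forall x y, A x -> spec_le x y -> A y.

(* Coherent: the intersection of two compact saturated sets is compact
   (compactness as in MathComp-Analysis: no separation axiom). *)
Definition coherent (T : topologicalType) : Prop :=
  forall A B : set T, compact A -> saturated A -> compact B -> saturated B ->
    compact (A `&` B).

Definition directed_preorder (I : Type) (le : I -> I -> Prop) : Prop :=
  (forall i, le i i) /\ (forall i j k, le i j -> le j k -> le i k) /\
  (exists i : I, True) /\ (forall i j, exists k, le i k /\ le j k).

Definition countably_cofinal (I : Type) (le : I -> I -> Prop) : Prop :=
  exists C : set I, countable C /\ forall i, exists j, C j /\ le i j.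

Definition proj_system (I : Type) (le : I -> I -> Prop)
    (X : I -> topologicalType) (p : forall i j, le i j -> X j -> X i) : Prop :=
  (forall i j (h : le i j), continuous (p i j h)) /\
  (forall i (h : le i i), p i i h = id) /\
  (forall i j k (hij : le i j) (hjk : le j k) (hik : le i k),
      p i j hij \o p j k hjk = p i k hik).

Definition proj_cone (I : Type) (le : I -> I -> Prop)
    (X : I -> topologicalType) (p : forall i j, le i j -> X j -> X i)
    (L : topologicalType) (q : forall i, L -> X i) : Prop :=
  (forall i, continuous (q i)) /\
  (forall i j (h : le i j), p i j h \o q j = q i).

Definition is_proj_limit (I : Type) (le : I -> I -> Prop)
    (X : I -> topologicalType) (p : forall i j, le i j -> X j -> X i)
    (L : topologicalType) (q : forall i, L -> X i) : Prop :=
  proj_cone p q /\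
  forall (Y : topologicalType) (r : forall i, Y -> X i), proj_cone p r ->
    exists u : Y -> L, continuous u /\ (forall i, q i \o u = r i) /\
      forall v : Y -> L, continuous v -> (forall i, q i \o v = r i) -> v = u.

From HB Require Import structures.
From mathcomp Require Import all_boot all_order.
From mathcomp Require Import boolp classical_sets functions cardinality topology.
Set Implicit Arguments. Unset Strict Implicit. Unset Printing Implicit Defensive.
Local Open Scope classical_set_scope.

(* The index set is nat and every space has the points [inl true], [inl false]
   and [inr k].  At stage n, an open set meeting one of the [inl b] or the tail
   {inr k | k >= n} contains that whole tail; outside the tail there are only
   finitely many points, so every subset of a stage is compact.  The limit
   carries the topology generated by all stages: an open set through [inl b]
   only has to contain some tail.  There the complements of the two points
   [inl b] are open, hence saturated, and compact, but their intersection is the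
   infinite discrete set of the [inr k].  Every limit of the system is
   homeomorphic to this one, and coherence is invariant under homeomorphisms. *)

Section SpecializationAndCompactness.
Variables S T : topologicalType.

Lemma continuous_spec_le (f : S -> T) (x y : S) :
  continuous f -> spec_le x y -> spec_le (f x) (f y).
Proof. by move=> /continuousP fc xy U oU; exact: xy _ (fc U oU). Qed.

Lemma open_saturated (U : set S) : open U -> saturated U.
Proof. by move=> oU x y Ux; exact. Qed.

Lemma compact_of_compact_diff_open (A : set S) (y : S) : A y ->
  (forall U, open U -> U y -> compact (A `\` U)) -> compact A.
Proof.
move=> Ay cAU F PF FA; have [cl|ncl] := pselect (cluster F y); first by exists y.
have [B [U [FB [[oU Uy] BU]]]] :
    exists B U : set S, F B /\ open_nbhs y U /\ ~ (B `&` U !=set0).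
  apply: contrapT => H; apply: ncl; rewrite clusterEonbhs => B U FB yU.
  by apply: contrapT => BU; apply: H; exists B, U.
have FAU : F (A `\` U).
  by apply: filterS (filterI FA FB) => x [Ax Bx]; split => // Ux; apply: BU; exists x.
by have [x [[Ax _] clx]] := cAU U oU Uy F PF FAU; exists x.
Qed.

Lemma coherent_homeo (f : S -> T) (g : T -> S) : continuous f -> continuous g ->
  cancel f g -> cancel g f -> coherent S -> coherent T.
Proof.
move=> fc gc fK gK cohS A B cA sA cB sB.
have image_sat C : saturated C -> saturated (g @` C).
  move=> sC _ y [c Cc <-] /(continuous_spec_le fc); rewrite gK => cy.
  by exists (f y); [exact: sC cy|exact: fK].
have image_cpt C : compact C -> compact (g @` C).
  by apply: continuous_compact; exact: continuous_subspaceT.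
have cAB := cohS _ _ (image_cpt _ cA) (image_sat _ sA) (image_cpt _ cB) (image_sat _ sB).
suff <- : f @` (g @` A `&` g @` B) = A `&` B.
  by apply: continuous_compact cAB; exact: continuous_subspaceT.
apply/seteqP; split => [_ [_ [[a Aa <-] [b Bb gba]] <-]|x [Ax Bx]].
  by rewrite gK; split => //; rewrite -[a]gK -gba gK.
by exists (g x); [split; exists x|rewrite gK].
Qed.

End SpecializationAndCompactness.

Section ProjectiveLimits.
Variables (I : Type) (le : I -> I -> Prop) (X : I -> topologicalType).
Variable p : forall i j, le i j -> X j -> X i.

Lemma proj_limit_endo_id (L : topologicalType) (q : forall i, L -> X i)
    (w : L -> L) : is_proj_limit p q -> continuous w ->
  (forall i, q i \o w = q i) -> w = id.
Proof.
move=> [qcone univ] wc qw; have [u [_ [_ uniq]]] := univ L q qcone.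
by rewrite (uniq w wc qw) (uniq id) // => x; exact: cvg_id.
Qed.

Lemma proj_limit_unique (L L' : topologicalType) (q : forall i, L -> X i)
    (q' : forall i, L' -> X i) : is_proj_limit p q -> is_proj_limit p q' ->
  exists (f : L -> L') (g : L' -> L),
    [/\ continuous f, continuous g, cancel f g & cancel g f].
Proof.
move=> Lq Lq'; have [[qcone _] [q'cone _]] := (Lq, Lq').
have [f [fc [fq _]]] := Lq'.2 L q qcone.
have [g [gc [gq _]]] := Lq.2 L' q' q'cone.
have gfc : continuous (g \o f) by move=> x; apply: continuous_comp; [exact: fc|exact: gc].
have fgc : continuous (f \o g) by move=> x; apply: continuous_comp; [exact: gc|exact: fc].
have gfq i : q i \o (g \o f) = q i by rewrite compA gq fq.
have fgq i : q' i \o (f \o g) = q' i by rewrite compA fq gq.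
have gfE := proj_limit_endo_id Lq gfc gfq.
have fgE := proj_limit_endo_id Lq' fgc fgq.
by exists f, g; split => // x; [rewrite -[RHS]/(id x) -gfE|rewrite -[RHS]/(id x) -fgE].
Qed.

End ProjectiveLimits.

Lemma directed_preorder_leq : directed_preorder (fun i j : nat => (i <= j)%N).
Proof.
split; first exact: leqnn; split; first by move=> i j k; exact: leq_trans.
split; first by exists 0%N.
by move=> i j; exists (maxn i j); rewrite leq_maxl leq_maxr.
Qed.

Lemma countably_cofinal_leq : countably_cofinal (fun i j : nat => (i <= j)%N).
Proof. by exists setT; split; [exact: countableP|move=> i; exists i]. Qed.

Definition point : Type := bool + nat.

Definition tail (n : nat) : set point := inr @` [set k | (n <= k)%N].

Lemma tail_mono m n : (m <= n)%N -> tail n `<=` tail m.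
Proof. by move=> mn _ [k nk <-]; exists k => //; exact: leq_trans nk. Qed.

Definition stage_open (n : nat) (U : set point) : Prop :=
  U `&` (range inl `|` tail n) !=set0 -> tail n `<=` U.

Definition limit_open (U : set point) : Prop :=
  U `&` range inl !=set0 -> exists n, tail n `<=` U.

Definition stage (n : nat) : Type := point.
HB.instance Definition _ n := Choice.on (stage n).

Lemma stage_openT n : stage_open n setT.
Proof. by []. Qed.

Lemma stage_openI n : setI_closed (stage_open n).
Proof.
move=> U V oU oV [x [[Ux Vx] Mx]] z tz.
by split; [apply: oU tz; exists x|apply: oV tz; exists x].
Qed.

Lemma stage_openU n (J : Type) (U : J -> set point) :
  (forall j, stage_open n (U j)) -> stage_open n (\bigcup_j U j).
Proof.
move=> oU [x [[j _ Ux] Mx]] z tz; exists j => //.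
by apply: oU tz; exists x.
Qed.

HB.instance Definition _ n :=
  isOpenTopological.Build (stage n) (@stage_openT n) (@stage_openI n) (@stage_openU n).

Definition limit_space : Type := point.
HB.instance Definition _ := Choice.on limit_space.

Lemma limit_openT : limit_open setT.
Proof. by move=> _; exists 0%N. Qed.

Lemma limit_openI : setI_closed limit_open.
Proof.
move=> U V oU oV [x [[Ux Vx] ix]].
have [m tU] : exists m, tail m `<=` U by apply: oU; exists x.
have [n tV] : exists n, tail n `<=` V by apply: oV; exists x.
exists (maxn m n) => z tz; split.
  by apply: tU; apply: tail_mono tz; exact: leq_maxl.
by apply: tV; apply: tail_mono tz; exact: leq_maxr.
Qed.

Lemma limit_openU (J : Type) (U : J -> set point) :
  (forall j, limit_open (U j)) -> limit_open (\bigcup_j U j).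
Proof.
move=> oU [x [[j _ Ux] ix]].
have [n tU] : exists n, tail n `<=` U j by apply: oU; exists x.
by exists n => z /tU; exists j.
Qed.

HB.instance Definition _ :=
  isOpenTopological.Build limit_space limit_openT limit_openI limit_openU.

Lemma finite_setC_tail n : finite_set (~` tail n).
Proof.
apply: (@sub_finite_set _ _ (range inl `|` inr @` `I_n)).
  move=> [b|k] tk; first by left; exists b.
  by right; exists k => //=; rewrite ltnNge; apply/negP => nk; apply: tk; exists k.
by rewrite finite_setU; split; apply: finite_image; [exact: finite_finset|exact: finite_II].
Qed.

Lemma stage_open_mono m n (U : set point) :
  (m <= n)%N -> stage_open m U -> stage_open n U.
Proof.
move=> mn oU [x [Ux Mx]]; apply: subset_trans (tail_mono mn) (oU _).
by exists x; split => //; case: Mx => [ix|/(tail_mono mn) tx]; [left|right].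
Qed.

Lemma stage_open_limit_open n (U : set point) : stage_open n U -> limit_open U.
Proof. by move=> oU [x [Ux ix]]; exists n; apply: oU; exists x; split => //; left. Qed.

Lemma limit_open_local (U : set point) (x : point) : limit_open U -> U x ->
  exists n (V : set point), [/\ stage_open n V, V x & V `<=` U].
Proof.
case: x => [b|k] oU Ux.
  have [n tU] : exists n, tail n `<=` U by apply: oU; exists (inl b); split => //; exists b.
  exists n, ([set inl b] `|` tail n); split; [by move=> _ z; right|by left|].
  by move=> z [->|/tU].
exists k.+1, [set inr k]; split => //; last by move=> z ->.
by move=> [_ [-> [[b _ //]|[j /= kj [jk]]]]]; rewrite jk ltnn in kj.
Qed.

Lemma stage_compact n (A : set (stage n)) : compact A.
Proof.
rewrite -(setUIDK A (tail n)); apply: compactU; last first.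
  apply/finite_compact/(sub_finite_set _ (finite_setC_tail n)); exact: subIsetr.
have [[y [Ay ty]]|/nonemptyPn->] := pselect (A `&` tail n !=set0); last exact: compact0.
apply: (@compact_of_compact_diff_open _ _ y) => // U oU Uy.
suff -> : A `&` tail n `\` U = set0 by exact: compact0.
apply/seteqP; split => // z [[_ tz] Uz]; apply: Uz; apply: oU tz.
by exists y; split => //; right.
Qed.

Lemma stage_coherent n : coherent (stage n).
Proof. by move=> A B *; exact: stage_compact. Qed.

Definition stage_map (i j : nat) (_ : (i <= j)%N) : stage j -> stage i := id.

Lemma stage_system : proj_system stage_map.
Proof. by split => // i j ij; apply/continuousP => U; exact: stage_open_mono ij. Qed.

Definition limit_proj (i : nat) : limit_space -> stage i := id.

Lemma limit_cone : proj_cone stage_map limit_proj.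
Proof. by split => // i; apply/continuousP => U; exact: stage_open_limit_open. Qed.

Lemma limit_space_is_limit : is_proj_limit stage_map limit_proj.
Proof.
split=> [|Y r [rc rcomm]]; first exact: limit_cone.
have rE i : r i = r 0%N := rcomm 0%N i (leq0n i).
exists (r 0%N : Y -> limit_space); split; last split.
- apply/continuousP => U oU; rewrite openE => y Uy.
  have [n [V [oV Vy VU]]] := limit_open_local oU Uy.
  apply: (@filterS _ _ _ (r n @^-1` V)); first by rewrite rE => z /VU.
  have /continuousP rnc := rc n.
  by apply: open_nbhs_nbhs; split; [exact: rnc|rewrite rE].
- by move=> i; rewrite (rE i).
- by move=> v _ vE; exact: (vE 0%N).
Qed.

Definition punctured (b : bool) : set limit_space := ~` [set inl b].

Lemma punctured_open b : open (punctured b).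
Proof. by move=> _; exists 0%N => _ [k _ <-]. Qed.

Lemma punctured_compact b : compact (punctured b).
Proof.
apply: (@compact_of_compact_diff_open _ _ (inl (~~ b) : limit_space)); first by case: b.
move=> U oU Ub; have [n tU] : exists n, tail n `<=` U.
  by apply: oU; exists (inl (~~ b)); split => //; exists (~~ b).
by apply/finite_compact/(sub_finite_set _ (finite_setC_tail n)) => x [_ Ux] /tU.
Qed.

Lemma punctured_setI : punctured true `&` punctured false = range inr.
Proof.
apply/seteqP; split => [[[]|k] [pt pf]|_ [k _ <-]] //.
  by case: pt.
by case: pf.
Qed.

Lemma range_inr_not_compact : ~ compact (range inr : set limit_space).
Proof.
pose G := (inr : nat -> limit_space) @ \oo.
move=> /(_ G (fmap_proper_filter _ _)) cpt.
have [_ [[k _ <-] clk]] : range inr `&` cluster G !=set0.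
  by apply: cpt; exists 0%N => // j _; exists j.
have Gtail : G (tail k.+1) by exists k.+1 => // j kj; exists j.
have Nk : nbhs (inr k : limit_space) [set inr k].
  by apply: open_nbhs_nbhs; split => //; move=> [_ [-> [b _ //]]].
have [_ [[j /= kj <-] [jk]]] := clk _ _ Gtail Nk.
by rewrite jk ltnn in kj.
Qed.

Lemma limit_space_not_coherent : ~ coherent limit_space.
Proof.
have sat b : saturated (punctured b) by apply: open_saturated; exact: punctured_open.
move=> coh; apply: range_inr_not_compact; rewrite -punctured_setI.
by apply: coh; [exact: punctured_compact|exact: sat|exact: punctured_compact|exact: sat].
Qed.

Theorem corollary4p6 :
  exists (I : Type) (le : I -> I -> Prop) (X : I -> topologicalType)
         (p : forall i j, le i j -> X j -> X i),
    directed_preorder le /\ countably_cofinal le /\ proj_system p /\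
        (forall i, coherent (X i)) /\
        (exists (L : topologicalType) (q : forall i, L -> X i), is_proj_limit p q) /\
        (forall (L : topologicalType) (q : forall i, L -> X i),
            is_proj_limit p q -> ~ coherent L).
Proof.
exists nat, (fun i j => (i <= j)%N), stage, stage_map.
split; first exact: directed_preorder_leq.
split; first exact: countably_cofinal_leq.
split; first exact: stage_system.
split; first exact: stage_coherent.
split; first by exists limit_space, limit_proj; exact: limit_space_is_limit.
move=> L q Lq; have [f [g [fc gc fK gK]]] := proj_limit_unique Lq limit_space_is_limit.
by move/(coherent_homeo fc gc fK gK); exact: limit_space_not_coherent.
Qed.
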